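(* Let $n=p_1^{m_1}\cdots p_k^{m_k}$ be such that $\mathcal E_{\mathbb Z_n}$ has at least two vertices (i.e. $n$ is neither prime nor the square of a prime). Then the complement graph $\overline{\mathcal E_{\mathbb Z_n}}$ is connected if and only if $n=p_1p_2\cdots p_k$ is squarefree with $k\ge 3$.
   Context: Primes $p_1<\dots<p_k$, positive integers $m_i$. The essential ideal graph $\mathcal E_{\mathbb Z_n}$ has vertices the nonzero proper ideals of $\mathbb Z_n$, with distinct $I,K$ adjacent iff $I+K$ is essential (an ideal is essential if it meets every nonzero ideal nontrivially; a nonzero ideal $\langle p_1^{r_1}\cdots p_k^{r_k}\rangle$, $0\le r_i\le m_i$, is essential iff $r_j\ne m_j$ for all $j$). $\overline\Gamma$ denotes the complement of $\Gamma$. *)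

From mathcomp Require Import all_boot all_order all_algebra.
Set Implicit Arguments. Unset Strict Implicit. Unset Printing Implicit Defensive.
Import GRing.Theory.
Local Open Scope ring_scope.

Section EssentialIdealGraph.
Variable n : nat.
Local Notation R := 'Z_n.

Definition is_ideal (I : {set R}) : bool :=
  [&& (0 : R) \in I,
      [forall x in I, forall y in I, (x + y) \in I],
      [forall x in I, (- x) \in I] &
      [forall r : R, forall x in I, (r * x) \in I]].

Definition zero_ideal : {set R} := [set 0].

Definition ideal_sum (I K : {set R}) : {set R} :=
  [set x + y | x in I, y in K].

Definition essential (I : {set R}) : bool :=
  is_ideal I &&
  [forall K : {set R}, (is_ideal K && (K != zero_ideal)) ==> (I :&: K != zero_ideal)].

Definition EVert : {set {set R}} :=
  [set I : {set R} | [&& is_ideal I, I != zero_ideal & I != [set: R]]].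

Definition compl_adj : rel {set R} :=
  fun I K => [&& I \in EVert, K \in EVert, I != K & ~~ essential (ideal_sum I K)].

Definition compl_connected : Prop :=
  forall I K, I \in EVert -> K \in EVert -> connect compl_adj I K.

End EssentialIdealGraph.

Definition squarefree (n : nat) : bool :=
  [forall p : 'I_n.+1, prime p ==> ~~ (p ^ 2 %| n)%N].

(** Every ideal of [Z_n] is the set of multiples [<d>] of a divisor [d] of [n],
    and a proper one lies in [<p>] for a prime [p]. When [p^2 | n] the ideal [<p>]
    is essential (a nonzero ideal not inside [<p>] contains some [p x <> 0]), so
    every sum with [<p>] is essential and [<p>] is isolated in the complement.
    When [p^2] does not divide [n], [<p>] meets [<n/p>] trivially, hence any two
    vertices inside [<p>] are adjacent. For squarefree [n] with three primes,
    vertices inside [<p>] and [<q>] are joined through [<pq>], which is proper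
    thanks to the third prime; with at most two primes, the only vertex inside
    [<p>] is [<p>] itself, so the complement has no edge at all. *)
From mathcomp Require Import all_boot all_order all_algebra.
Set Implicit Arguments. Unset Strict Implicit. Unset Printing Implicit Defensive.
Import GRing.Theory.

Lemma squarefreeP n : (0 < n)%N ->
  reflect (forall p, prime p -> ~~ (p * p %| n)%N) (squarefree n).
Proof.
move=> n_gt0; apply: (iffP forallP) => [sqf p p_pr | sqf p].
  apply/negP=> pp_n; have p_le_n : (p < n.+1)%N.
    by rewrite ltnS dvdn_leq // (dvdn_trans (dvdn_mulr p (dvdnn p))).
  by have /implyP/(_ p_pr) := sqf (Ordinal p_le_n); rewrite /= -mulnn pp_n.
by apply/implyP=> /sqf; rewrite mulnn.
Qed.

Lemma three_le_size_primes n p q r : (0 < n)%N ->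
  prime p -> prime q -> prime r -> p != q -> p != r -> q != r ->
  (p %| n)%N -> (q %| n)%N -> (r %| n)%N -> (3 <= size (primes n))%N.
Proof.
move=> n_gt0 p_pr q_pr r_pr pq pr qr pn qn rn.
rewrite -[3]/(size [:: p; q; r]) uniq_leq_size //= ?inE ?negb_or ?pq ?pr ?qr //.
by move=> x; rewrite !inE mem_primes => /or3P[]/eqP->; rewrite ?p_pr ?q_pr ?r_pr n_gt0.
Qed.

Lemma exists_prime_other2 n p q : (3 <= size (primes n))%N ->
  exists r, [/\ prime r, (r %| n)%N, r != p & r != q].
Proof.
move=> size_ge3; have [/hasP[r] | /hasPn others] :=
  boolP (has (fun r => (r != p) && (r != q)) (primes n)).
  by rewrite mem_primes => /and3P[r_pr _ rn] /andP[rp rq]; exists r.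
suff : (size (primes n) <= size [:: p; q])%N by rewrite leqNgt (leq_trans _ size_ge3).
apply: uniq_leq_size (primes_uniq n) _ => x /others.
by rewrite negb_and !negbK !inE orbC.
Qed.

(* Otherwise [r], a prime factor of [d/r] and one of [n/d] are three distinct
   primes dividing [n]. *)
Lemma prime_proper_divisor_eq n r d : (0 < n)%N -> (size (primes n) < 3)%N ->
  (forall p, prime p -> ~~ (p * p %| n)%N) ->
  prime r -> (r %| d)%N -> (d %| n)%N -> d != n -> d = r.
Proof.
move=> n_gt0 size_lt3 sqf r_pr rd dn d_neq_n; apply/eqP/negPn/negP=> d_neq_r.
have d_gt0 : (0 < d)%N := dvdn_gt0 n_gt0 dn.
have d_eq : d = (d %/ r * r)%N by rewrite divnK.
have n_eq : n = (n %/ d * d)%N by rewrite divnK.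
have dr_gt1 : (1 < d %/ r)%N.
  move: d_eq; case: (d %/ r) => [|[|//]] d_eq; first by move: d_gt0; rewrite d_eq.
  by move: d_neq_r; rewrite d_eq mul1n eqxx.
have nd_gt1 : (1 < n %/ d)%N.
  move: n_eq; case: (n %/ d) => [|[|//]] n_eq; first by move: n_gt0; rewrite n_eq.
  by move: d_neq_n; rewrite n_eq mul1n eqxx.
set s := pdiv (d %/ r); set u := pdiv (n %/ d).
have s_pr : prime s := pdiv_prime dr_gt1; have u_pr : prime u := pdiv_prime nd_gt1.
have rsu_n : (r * s * u %| n)%N.
  by rewrite n_eq mulnC dvdn_mul ?pdiv_dvd // d_eq mulnC dvdn_mul ?pdiv_dvd.
have rs_n : (r * s %| n)%N := dvdn_trans (dvdn_mulr _ (dvdnn _)) rsu_n.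
have ru_n : (r * u %| n)%N.
  by apply: dvdn_trans rsu_n; rewrite mulnAC dvdn_mulr.
have su_n : (s * u %| n)%N by apply: dvdn_trans rsu_n; rewrite -mulnA dvdn_mull.
have neq_sq a b : prime a -> (a * b %| n)%N -> a != b.
  by move=> a_pr ab_n; apply: contraNneq (sqf a a_pr) => ab; rewrite {2}ab.
move: size_lt3; rewrite ltnNge => /negP; apply.
apply: (three_le_size_primes n_gt0 r_pr s_pr u_pr
  (neq_sq _ _ r_pr rs_n) (neq_sq _ _ r_pr ru_n) (neq_sq _ _ s_pr su_n)).
- exact: dvdn_trans (dvdn_mulr _ (dvdnn _)) rs_n.
- exact: dvdn_trans (dvdn_mull _ (dvdnn _)) rs_n.
- exact: dvdn_trans (dvdn_mull _ (dvdnn _)) su_n.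
Qed.

Section IdealsOfZp.
Variable n : nat.
Hypothesis n_gt1 : (1 < n)%N.
Local Notation R := 'Z_n.

Lemma idealP (I : {set R}) : is_ideal I ->
  [/\ 0%R \in I, forall x y, x \in I -> y \in I -> (x + y)%R \in I,
      forall x, x \in I -> (- x)%R \in I &
      forall r x, x \in I -> (r * x)%R \in I].
Proof.
case/and4P=> I0 /forallP ID /forallP IN /forallP IM; split=> //.
- by move=> x y xI yI; have /implyP/(_ xI)/forallP/(_ y)/implyP := ID x; apply.
- by move=> x xI; have /implyP := IN x; apply.
- by move=> r x xI; have /forallP/(_ x)/implyP := IM r; apply.
Qed.

Lemma idealI (I : {set R}) :
  0%R \in I -> (forall x y, x \in I -> y \in I -> (x + y)%R \in I) ->
  (forall x, x \in I -> (- x)%R \in I) ->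
  (forall r x, x \in I -> (r * x)%R \in I) -> is_ideal I.
Proof.
move=> I0 ID IN IM; apply/and4P; split=> //.
- by apply/forall_inP=> x xI; apply/forall_inP=> y yI; apply: ID.
- by apply/forall_inP=> x; apply: IN.
- by apply/forallP=> r; apply/forall_inP=> x; apply: IM.
Qed.

Lemma ideal_setT : is_ideal [set: R].
Proof. by apply: idealI => *; rewrite inE. Qed.

Lemma ideal_sum_ideal (I K : {set R}) :
  is_ideal I -> is_ideal K -> is_ideal (ideal_sum I K).
Proof.
move=> /idealP[I0 ID IN IM] /idealP[K0 KD KN KM]; apply: idealI.
- by apply/imset2P; exists 0%R 0%R; rewrite ?addr0.
- move=> _ _ /imset2P[a b aI bK ->] /imset2P[c e cI eK ->].
  by apply/imset2P; exists (a + c)%R (b + e)%R; [exact: ID | exact: KD | rewrite addrACA].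
- move=> _ /imset2P[a b aI bK ->].
  by apply/imset2P; exists (- a)%R (- b)%R; [exact: IN | exact: KN | rewrite opprD].
- move=> r _ /imset2P[a b aI bK ->].
  by apply/imset2P; exists (r * a)%R (r * b)%R; [exact: IM | exact: KM | rewrite mulrDr].
Qed.

Lemma ideal_sum_subl (I K : {set R}) : 0%R \in K -> I \subset ideal_sum I K.
Proof. by move=> K0; apply/subsetP=> x xI; apply/imset2P; exists x 0%R; rewrite ?addr0. Qed.

Lemma ideal_sum_subr (I K : {set R}) : 0%R \in I -> K \subset ideal_sum I K.
Proof. by move=> I0; apply/subsetP=> x xK; apply/imset2P; exists 0%R x; rewrite ?add0r. Qed.

Lemma ideal_sum_min (I K J : {set R}) :
  is_ideal J -> I \subset J -> K \subset J -> ideal_sum I K \subset J.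
Proof.
case/idealP=> _ JD _ _ IJ KJ; apply/subsetP=> _ /imset2P[a b aI bK ->].
by apply: JD; [apply: (subsetP IJ) | apply: (subsetP KJ)].
Qed.

Lemma zero_idealPn (I : {set R}) :
  0%R \in I -> (I != zero_ideal n) = [exists x in I, x != 0%R].
Proof.
move=> I0; apply/idP/idP; last first.
  by case/exists_inP=> x xI; apply: contraNneq => I_0; move: xI; rewrite I_0 inE.
apply: contraR; rewrite negb_exists_in => /forall_inP I_0.
by apply/eqP/setP=> x; rewrite inE; apply/idP/eqP=> [/I_0/negPn/eqP | ->].
Qed.

Lemma essentialS (I J : {set R}) :
  is_ideal J -> I \subset J -> essential I -> essential J.
Proof.
move=> J_id IJ /andP[I_id /forallP I_ess]; rewrite /essential J_id.
apply/forallP=> K; apply/implyP=> K_nz; have /implyP/(_ K_nz) := I_ess K.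
case/andP: K_nz => /idealP[K0 _ _ _] _.
have [[I0 _ _ _] [J0 _ _ _]] := (idealP I_id, idealP J_id).
rewrite !zero_idealPn ?inE ?I0 ?J0 ?K0 // => /exists_inP[x].
rewrite !inE => /andP[xI xK] x_nz; apply/exists_inP; exists x => //.
by rewrite !inE xK (subsetP IJ).
Qed.

Lemma essentialT : essential [set: R].
Proof.
by rewrite /essential ideal_setT; apply/forallP=> K; rewrite setTI; apply/implyP=> /andP[].
Qed.

Lemma Zp_natE (x : R) : x = (x : nat)%:R%R.
Proof. by rewrite natr_Zp. Qed.

Lemma Zp_eq0 (x : R) : (x == 0%R) = ((x : nat) == 0%N).
Proof. by []. Qed.

Definition multiples (d : nat) : {set R} := [set x : R | (d %| x)%N].

Lemma mem_multiples d (x : R) : (x \in multiples d) = (d %| x)%N.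
Proof. by rewrite inE. Qed.

Lemma natr_multiples d k : (d %| n)%N -> ((k%:R : R)%R \in multiples d) = (d %| k)%N.
Proof. by move=> dn; rewrite inE val_Zp_nat // /dvdn modn_dvdm. Qed.

Lemma multiplesS d e : (d %| e)%N -> multiples e \subset multiples d.
Proof. by move=> de; apply/subsetP=> x; rewrite !mem_multiples; apply: dvdn_trans. Qed.

Lemma multiples_ideal d : (d %| n)%N -> is_ideal (multiples d).
Proof.
move=> dn; have IM (r x : R) : x \in multiples d -> (r * x)%R \in multiples d.
  by rewrite (Zp_natE r) (Zp_natE x) -natrM !natr_multiples //; apply: dvdn_mull.
apply: idealI => [|x y|x|//]; first by rewrite mem_multiples dvdn0.
  by rewrite (Zp_natE x) (Zp_natE y) -natrD !natr_multiples //; apply: dvdn_add.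
by rewrite -mulN1r; apply: IM.
Qed.

Lemma multiples1 : multiples 1 = [set: R].
Proof. by apply/setP=> x; rewrite mem_multiples dvd1n inE. Qed.

Lemma multiplesn : multiples n = zero_ideal n.
Proof.
apply/setP=> x; rewrite mem_multiples inE Zp_eq0.
apply/idP/eqP=> [|->]; last exact: dvdn0.
have x_lt_n : (x < n)%N by rewrite -[n in (_ < n)%N]Zp_cast.
by case: (posnP x) => // x_gt0 /(dvdn_leq x_gt0); rewrite leqNgt x_lt_n.
Qed.

Lemma multiples_neq0 d : (d %| n)%N -> (0 < d < n)%N -> multiples d != zero_ideal n.
Proof.
move=> dn /andP[d_gt0 d_lt_n]; apply/negP=> /eqP d_0.
have : (d%:R : R)%R \in multiples d by rewrite natr_multiples.
by rewrite d_0 inE Zp_eq0 val_Zp_nat // modn_small // gtn_eqF.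
Qed.

Lemma multiples_neqT d : (d %| n)%N -> (1 < d)%N -> multiples d != [set: R].
Proof.
move=> dn d_gt1; apply/negP=> /eqP d_T.
have : (1%:R : R)%R \in multiples d by rewrite d_T inE.
by rewrite natr_multiples // dvdn1 gtn_eqF.
Qed.

Lemma prime_multiples_vertex p : prime p -> (p %| n)%N -> (p < n)%N ->
  multiples p \in EVert n.
Proof.
move=> p_pr pn p_lt_n.
by rewrite inE multiples_ideal // multiples_neq0 ?multiples_neqT ?prime_gt1 ?prime_gt0.
Qed.

(* [g] is the least positive [k] with [k%:R \in I]; division with remainder shows
   that every such [k], in particular [n], is a multiple of [g]. *)
Lemma idealE (I : {set R}) : is_ideal I ->
  exists2 g, (0 < g)%N && (g %| n)%N & I = multiples g.
Proof.
move=> I_id; have [I0 ID IN IM] := idealP I_id.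
have n_in : exists k, (0 < k)%N && ((k%:R : R)%R \in I).
  by exists n; rewrite pchar_Zp // I0 ltnW.
have [g /andP[g_gt0 gI] g_min] := ex_minnP n_in.
have g_dvd k : (k%:R : R)%R \in I -> (g %| k)%N.
  move=> kI; have : ((k %% g)%:R : R)%R \in I.
    have -> : ((k %% g)%:R : R)%R = (k%:R - (k %/ g)%:R * g%:R)%R.
      by rewrite {2}(divn_eq k g) natrD natrM addrC addKr.
    by rewrite ID ?IN ?IM.
  case: (posnP (k %% g)) => [mod0 | mod_gt0 modI]; first by rewrite /dvdn mod0.
  by have := g_min _ (introT andP (conj mod_gt0 modI)); rewrite leqNgt ltn_pmod.
have gn : (g %| n)%N by rewrite g_dvd // pchar_Zp.
exists g; first by rewrite g_gt0 gn.
apply/setP=> x; rewrite mem_multiples; apply/idP/idP => [xI | gx].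
  by rewrite g_dvd -?Zp_natE.
by rewrite (Zp_natE x) -(divnK gx) natrM IM.
Qed.

Lemma proper_ideal_sub_prime (I : {set R}) : is_ideal I -> I != [set: R] ->
  exists p, [/\ prime p, (p %| n)%N & I \subset multiples p].
Proof.
move=> I_id; have [g /andP[g_gt0 gn] ->] := idealE I_id => I_neqT.
have g_gt1 : (1 < g)%N.
  by move: g_gt0 I_neqT; case: g {gn} => [|[|]] //; rewrite multiples1 eqxx.
exists (pdiv g); split; first exact: pdiv_prime.
  exact: dvdn_trans (pdiv_dvd g) gn.
exact: multiplesS (pdiv_dvd g).
Qed.

Lemma essential_multiples_prime p : prime p -> (p * p %| n)%N ->
  essential (multiples p).
Proof.
move=> p_pr pp_n; have pn : (p %| n)%N := dvdn_trans (dvdn_mulr _ (dvdnn p)) pp_n.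
rewrite /essential multiples_ideal //; apply/forallP=> K; apply/implyP.
case/andP=> K_id; have [K0 _ _ KM] := idealP K_id.
rewrite !zero_idealPn ?inE ?K0 ?mem_multiples ?dvdn0 // => /exists_inP[x xK x_nz].
have [px | p_ndvd_x] := boolP (p %| x)%N.
  by apply/exists_inP; exists x; rewrite // !inE xK andbT.
apply/exists_inP; exists ((p%:R : R) * x)%R.
  by rewrite inE KM // (Zp_natE x) -natrM natr_multiples // dvdn_mulr.
rewrite (Zp_natE x) -natrM Zp_eq0 val_Zp_nat //; apply: contra p_ndvd_x => /eqP px0.
have : (p * p %| p * x)%N by apply: dvdn_trans pp_n _; rewrite /dvdn px0.
by rewrite dvdn_pmul2l ?prime_gt0.
Qed.

Lemma not_essential_multiples_prime p : prime p -> (p %| n)%N -> ~~ (p * p %| n)%N ->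
  ~~ essential (multiples p).
Proof.
move=> p_pr pn p2_ndvd; have p_gt0 := prime_gt0 p_pr.
have m_n : (n %/ p * p = n)%N := divnK pn.
have m_bounds : (0 < n %/ p < n)%N.
  by rewrite divn_gt0 // dvdn_leq ?ltn_Pdiv ?prime_gt1 // ltnW.
have cop : coprime (n %/ p) p.
  rewrite coprime_sym prime_coprime //; apply: contra p2_ndvd => pm.
  by rewrite -m_n dvdn_mul.
apply/negP=> /andP[_ /forallP/(_ (multiples (n %/ p)))].
rewrite multiples_ideal ?dvdn_div // multiples_neq0 ?dvdn_div //= -multiplesn.
move/eqP; apply; apply/setP=> x; rewrite inE !mem_multiples.
apply/andP/idP=> [[px mx] | nx].
  apply: dvdn_trans (_ : n %| n %/ p * p)%N _; first by rewrite m_n.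
  by rewrite Gauss_dvd // mx px.
by split; apply: dvdn_trans nx; rewrite ?dvdn_div.
Qed.

Lemma connect_sub_multiples p (I K : {set R}) :
  prime p -> (p %| n)%N -> ~~ (p * p %| n)%N ->
  I \in EVert n -> K \in EVert n -> I \subset multiples p -> K \subset multiples p ->
  connect (@compl_adj n) I K.
Proof.
move=> p_pr pn p2_ndvd IV KV Ip Kp; have [-> | IK] := eqVneq I K; first exact: connect0.
apply: connect1; rewrite /compl_adj IV KV IK /=.
apply: contra (not_essential_multiples_prime p_pr pn p2_ndvd).
by apply: essentialS; rewrite ?multiples_ideal ?ideal_sum_min ?multiples_ideal.
Qed.

Lemma essential_compl_isolated (I K : {set R}) : essential I -> ~~ @compl_adj n I K.
Proof.
move=> I_ess; apply/negP=> /and4P[IV KV _]; apply/negP; rewrite negbK.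
move: IV KV; rewrite !inE => /and3P[I_id _ _] /and3P[K_id _ _].
apply: essentialS I_ess; first exact: ideal_sum_ideal.
by case/idealP: K_id => K0 _ _ _; apply: ideal_sum_subl.
Qed.

Lemma vertex_sub_multiples_eq (I : {set R}) r :
  squarefree n -> (size (primes n) < 3)%N -> prime r -> (r %| n)%N ->
  I \in EVert n -> I \subset multiples r -> I = multiples r.
Proof.
move=> sqf size_lt3 r_pr rn; rewrite inE => /and3P[I_id I_nz _] Ir.
have [d /andP[d_gt0 dn] I_eq] := idealE I_id.
have rd : (r %| d)%N.
  by rewrite -(natr_multiples d rn) (subsetP Ir) // I_eq natr_multiples.
have d_neq_n : d != n by apply: contraNneq I_nz => d_n; rewrite I_eq d_n multiplesn.
have /squarefreeP sqfP := sqf; have n_gt0 := ltnW n_gt1.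
by rewrite I_eq (prime_proper_divisor_eq n_gt0 size_lt3 (sqfP n_gt0) r_pr rd dn d_neq_n).
Qed.

Lemma no_compl_adj_two_primes (I K : {set R}) :
  squarefree n -> (size (primes n) < 3)%N -> ~~ @compl_adj n I K.
Proof.
move=> sqf size_lt3; apply/negP=> /and4P[IV KV IK IK_ness].
move: (IV) (KV); rewrite !inE => /and3P[I_id _ _] /and3P[K_id _ _].
have S_neqT : ideal_sum I K != [set: R].
  by apply: contraNneq IK_ness => ->; apply: essentialT.
have [r [r_pr rn Sr]] := proper_ideal_sub_prime (ideal_sum_ideal I_id K_id) S_neqT.
have [[I0 _ _ _] [K0 _ _ _]] := (idealP I_id, idealP K_id).
have Ir := subset_trans (ideal_sum_subl I K0) Sr.
have Kr := subset_trans (ideal_sum_subr K I0) Sr.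
move: IK; rewrite (vertex_sub_multiples_eq sqf size_lt3 r_pr rn IV Ir).
by rewrite (vertex_sub_multiples_eq sqf size_lt3 r_pr rn KV Kr) eqxx.
Qed.

Lemma squarefree_compl_connected :
  squarefree n -> (3 <= size (primes n))%N -> compl_connected n.
Proof.
move=> /squarefreeP sqfP size_ge3 I K IV KV; have n_gt0 := ltnW n_gt1.
move: (IV) (KV); rewrite !inE => /and3P[I_id _ I_neqT] /and3P[K_id _ K_neqT].
have [p [p_pr pn Ip]] := proper_ideal_sub_prime I_id I_neqT.
have [q [q_pr qn Kq]] := proper_ideal_sub_prime K_id K_neqT.
have [sqf_p sqf_q] := (sqfP n_gt0 p p_pr, sqfP n_gt0 q q_pr).
have [p_q | pq] := eqVneq p q.
  by apply: connect_sub_multiples p_pr pn sqf_p IV KV Ip _; rewrite p_q.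
have [r [r_pr rn rp rq]] := exists_prime_other2 p q size_ge3.
have pq_cop : coprime p q by rewrite prime_coprime // dvdn_prime2.
have pq_n : (p * q %| n)%N by rewrite Gauss_dvd // pn qn.
have pq_neq_n : p * q != n.
  apply/eqP=> pq_eq; move: rn; rewrite -pq_eq Euclid_dvdM // !dvdn_prime2 //.
  by rewrite (negbTE rp) (negbTE rq).
have PQV : multiples (p * q) \in EVert n.
  rewrite inE multiples_ideal // multiples_neqT ?multiples_neq0 // ?andbT.
    by rewrite muln_gt0 !prime_gt0 // ltn_neqAle pq_neq_n dvdn_leq.
  by rewrite (leq_trans (prime_gt1 p_pr)) // leq_pmulr ?prime_gt0.
apply: connect_trans (connect_sub_multiples p_pr pn sqf_p IV PQV Ip _) _.
  exact/multiplesS/dvdn_mulr.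
exact: connect_sub_multiples q_pr qn sqf_q PQV KV (multiplesS (dvdn_mull _ _)) Kq.
Qed.

Lemma not_compl_connected_isolated (I : {set R}) :
  (2 <= #|EVert n|)%N -> I \in EVert n -> (forall K, ~~ @compl_adj n I K) ->
  ~ compl_connected n.
Proof.
move=> card_ge2 IV I_isolated conn.
have [K /andP[KV KI]] : exists K, (K \in EVert n) && (K != I).
  apply/existsP; apply: contraLR card_ge2; rewrite negb_exists => /forallP noK.
  rewrite -leqNgt -(cards1 I) subset_leq_card //; apply/subsetP=> K KV.
  by move: (noK K); rewrite KV /= negbK in_set1.
have /connectP[[|J s] /= path_IK KE] := conn I K IV KV.
  by move: KI; rewrite KE eqxx.
by case/andP: path_IK => IJ _; move: (I_isolated J); rewrite IJ.
Qed.

End IdealsOfZp.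

Theorem mainTheorem14 (n : nat) :
  (1 < n)%N -> (2 <= #|EVert n|)%N ->
  (compl_connected n <-> (squarefree n /\ (3 <= size (primes n))%N)).
Proof.
move=> n_gt1 card_ge2; split; last by case; apply: squarefree_compl_connected.
move=> conn; have n_gt0 := ltnW n_gt1.
have sqf : squarefree n.
  apply/squarefreeP => // p p_pr; apply/negP=> pp_n.
  have pn : (p %| n)%N := dvdn_trans (dvdn_mulr _ (dvdnn p)) pp_n.
  have p_lt_n : (p < n)%N.
    by rewrite (leq_trans _ (dvdn_leq n_gt0 pp_n)) // ltn_Pmull ?prime_gt1 ?prime_gt0.
  apply: not_compl_connected_isolated card_ge2
    (prime_multiples_vertex n_gt1 p_pr pn p_lt_n) _ conn => K.
  exact/essential_compl_isolated/essential_multiples_prime.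
split=> //; rewrite leqNgt; apply/negP=> size_lt3.
have /set0Pn[I IV] : EVert n != set0 by rewrite -card_gt0 (leq_trans _ card_ge2).
apply: not_compl_connected_isolated card_ge2 IV _ conn => K.
exact: no_compl_adj_two_primes.
Qed.
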